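(* Let $X$ be a connected weighted non-bipartite graph with vertex $u$ such that $0\in\Phi_{\mathbf e_u}(X)$. If $(E_0)_{u,u}>\frac12$, then $u$ is sedentary in $X$ and both copies $(0,u)$ and $(1,u)$ of $u$ are sedentary in $K_2\times X$. If $(E_0)_{u,u}=\frac12$, then $u$ is sedentary in $X$ if and only if its two copies $(0,u),(1,u)$ are sedentary in $K_2\times X$.
   Context: Graphs are simple, connected, undirected, with nonzero real edge weights; $A(X)$ is the weighted adjacency matrix with spectral decomposition $A(X)=\sum_\lambda\lambda E_\lambda$ over distinct eigenvalues, $E_\lambda$ the orthogonal projection onto the $\lambda$-eigenspace; $\Phi_{\mathbf e_u}(X)=\{\lambda:E_\lambda\mathbf e_u\ne0\}$. The bipartite double $K_2\times X$ is the weighted graph with vertex set $\{0,1\}\times V(X)$ and adjacency matrix $A(K_2)\otimes A(X)$; $(0,u),(1,u)$ are the two copies of $u$ (it is connected since $X$ is non-bipartite). With $U(t)=e^{itA}$, a vertex $u$ is sedentary if $\inf_{t>0}|U(t)_{u,u}|\ge C$ for some $0<C\le1$. *)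

From HB Require Import structures.
From mathcomp Require Import all_boot all_order all_algebra.
From mathcomp Require Import all_classical all_reals all_analysis.
From mathcomp Require Import complex mxtens.
Set Implicit Arguments. Unset Strict Implicit. Unset Printing Implicit Defensive.
Import Order.TTheory GRing.Theory Num.Theory.
Import numFieldNormedType.Exports.
Local Open Scope ring_scope.
Local Open Scope complex_scope.

Section Defs.
Variable R : realType.

Definition adjrel n (A : 'M[R]_n) : rel 'I_n := fun x y => A x y != 0.

Definition weighted_graph n (A : 'M[R]_n) : Prop :=
  A^T = A /\ forall i, A i i = 0.

Definition connected_graph n (A : 'M[R]_n) : Prop :=
  forall i j, connect (adjrel A) i j.

Definition bipartite_graph n (A : 'M[R]_n) : Prop :=
  exists f : 'I_n -> bool, forall i j, adjrel A i j -> f i != f j.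

(* E_lambda : orthogonal projection onto the lambda-eigenspace of A
   (B^T (B B^T)^-1 B, with the rows of B a basis of the eigenspace). *)
Definition eigenproj n (A : 'M[R]_n) (l : R) : 'M[R]_n :=
  let B := row_base (eigenspace A l) in B^T *m invmx (B *m B^T) *m B.

Definition evec n (u : 'I_n) : 'cV[R]_n := delta_mx u 0.

Definition eigsupport n (A : 'M[R]_n) (u : 'I_n) : pred R :=
  fun l => eigenproj A l *m evec u != 0.

Definition seqlim (v : nat -> R) : R := limn v.

Definition expm_partial n (A : 'M[R]_n) (t : R) (N : nat) : 'M[complex R]_n :=
  \sum_(k < N) ((('i * t%:C) ^+ k) / (k`!)%:R) *: map_mx (fun x => x%:C) (A ^+ k).

Definition transfer n (A : 'M[R]_n) (t : R) : 'M[complex R]_n :=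
  \matrix_(i, j) ((seqlim (fun N => complex.Re (expm_partial A t N i j)))
                  +i* (seqlim (fun N => complex.Im (expm_partial A t N i j)))).

Definition sedentary n (A : 'M[R]_n) (u : 'I_n) : Prop :=
  exists C : R, 0 < C <= 1 /\ forall t : R, 0 < t -> C%:C <= `|transfer A t u u|.

Definition adjK2 : 'M[R]_2 := \matrix_(i, j) (i != j)%:R.

Definition bipdouble n (A : 'M[R]_n) : 'M[R]_(2 * n) := adjK2 *t A.

Definition copy n (a : 'I_2) (u : 'I_n) : 'I_(2 * n) := mxtens_index (a, u).

End Defs.

From HB Require Import structures.
From mathcomp Require Import all_boot all_order all_algebra.
From mathcomp Require Import all_classical all_reals all_analysis.
From mathcomp Require Import complex mxtens.
From mathcomp Require Import spectral ring lra.
Set Implicit Arguments. Unset Strict Implicit. Unset Printing Implicit Defensive.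
Import Order.TTheory GRing.Theory Num.Theory.
Local Open Scope ring_scope.

(* Diagonalising the real symmetric matrix [A] gives weights [w_j >= 0] with
   [sum_j w_j = 1] and eigenvalues [r_j] such that [(A^k)_uu = sum_j w_j r_j^k],
   hence [U(t)_uu = f t + i g t] with [f t = sum_j w_j cos (t r_j)] and
   [g t = sum_j w_j sin (t r_j)]; moreover [p := (E_0)_uu] is the total weight of
   the [r_j = 0].  On the copies of [u] in [K_2 x X] the odd powers of the
   adjacency matrix vanish, so there [U(t)] is just [f t].  Now [f >= 2p - 1]
   and, by Jensen, [g^2 <= 2 + 2f - 4p].  If [p > 1/2], both [|f|] and
   [|f + i g|] stay above [2p - 1].  If [p = 1/2], then [0 <= f] and
   [|f + i g|^2 <= 3 f], so each modulus is bounded away from 0 iff the other is. *)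

Section ExponentialSeries.
Import numFieldNormedType.Exports.
Local Open Scope complex_scope.
Local Open Scope classical_set_scope.
Variable R : realType.

Definition cos_sign k : R := (~~ odd k)%:R * (-1) ^+ k./2.
Definition sin_sign k : R := (odd k)%:R * (-1) ^+ k.-1./2.

Lemma expr_i k : ('i : R[i]) ^+ k = cos_sign k +i* sin_sign k.
Proof.
rewrite /cos_sign /sin_sign -(odd_double_half k); move: (odd k) (k./2) => b m.
rewrite half_bit_double oddD odd_double addbF exprD -mul2n exprM sqr_i.
rewrite -[(-1 : R[i])](rmorphN1 (real_complex R)) -rmorphXn.
case: b => /=; last by rewrite expr0 !mul1r mul0r.
by rewrite mul2n doubleK expr1 mul0r mul1r; simpc.
Qed.

Lemma expm_partial_entry n (A : 'M[R]_n) t N i j :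
  expm_partial A t N i j =
  \sum_(k < N) 'i ^+ k * (t ^+ k / k`!%:R * (A ^+ k) i j)%:C.
Proof.
rewrite /expm_partial summxE; apply: eq_bigr => k _.
by rewrite !mxE exprMn !rmorphM /= fmorphV /= rmorphXn /= rmorph_nat !mulrA.
Qed.

Lemma Re_expm_partial n (A : 'M[R]_n) t N i j :
  complex.Re (expm_partial A t N i j) =
  \sum_(k < N) cos_sign k * (t ^+ k / k`!%:R * (A ^+ k) i j).
Proof.
rewrite expm_partial_entry raddf_sum; apply: eq_bigr => k _.
by rewrite expr_i /= mulr0 subr0.
Qed.

Lemma Im_expm_partial n (A : 'M[R]_n) t N i j :
  complex.Im (expm_partial A t N i j) =
  \sum_(k < N) sin_sign k * (t ^+ k / k`!%:R * (A ^+ k) i j).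
Proof.
rewrite expm_partial_entry raddf_sum; apply: eq_bigr => k _.
by rewrite expr_i /= mulr0 add0r.
Qed.

Lemma cvg_series_cos_sign x :
  series (fun k => cos_sign k * x ^+ k / k`!%:R) @ \oo --> cos x.
Proof.
have -> : (fun k => cos_sign k * x ^+ k / k`!%:R) = cos_coeff x.
  by apply/funext => k; rewrite /cos_coeff /cos_sign /= exprnP.
rewrite unlock; exact: is_cvg_series_cos_coeff.
Qed.

Lemma cvg_series_sin_sign x :
  series (fun k => sin_sign k * x ^+ k / k`!%:R) @ \oo --> sin x.
Proof. rewrite unlock; exact: is_cvg_series_sin_coeff. Qed.

Lemma cvg_moment_series (c : nat -> R) (F : R -> R) (m : nat -> R)
    (I : finType) (w r : I -> R) t :
  (forall x, series (fun k => c k * x ^+ k / k`!%:R) @ \oo --> F x) ->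
  (forall k, m k = \sum_j w j * r j ^+ k) ->
  (fun N => \sum_(k < N) c k * (t ^+ k / k`!%:R * m k)) @ \oo --> \sum_j w j * F (t * r j).
Proof.
move=> cvgF moments.
have -> : (fun N => \sum_(k < N) c k * (t ^+ k / k`!%:R * m k)) =
          (fun N => \sum_j w j * series (fun k => c k * (t * r j) ^+ k / k`!%:R) N).
  apply/funext => N; under eq_bigr do rewrite moments !mulr_sumr.
  rewrite exchange_big; apply: eq_bigr => j _.
  rewrite /series /= big_mkord mulr_sumr; apply: eq_bigr => k _.
  rewrite exprMn; ring.
apply: cvg_big; first exact: add_continuous.
by move=> j _; apply: cvgM => //; exact: cvg_cst.
Qed.

Lemma transfer_moments n (A : 'M[R]_n) u (I : finType) (w r : I -> R) :
  (forall k, (A ^+ k) u u = \sum_j w j * r j ^+ k) ->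
  forall t, transfer A t u u =
    (\sum_j w j * cos (t * r j)) +i* (\sum_j w j * sin (t * r j)).
Proof.
move=> moments t; rewrite /transfer mxE /seqlim.
congr (_ +i* _); apply: cvg_lim => //.
- under eq_fun do rewrite Re_expm_partial.
  exact: cvg_moment_series (@cvg_series_cos_sign) moments.
- under eq_fun do rewrite Im_expm_partial.
  exact: cvg_moment_series (@cvg_series_sin_sign) moments.
Qed.

End ExponentialSeries.

Lemma tensmx11 (R : comPzRingType) m n : (1 : 'M[R]_m) *t (1 : 'M[R]_n) = 1.
Proof.
apply/matrixP => i j.
case: (mxtens_indexP i) => a b; case: (mxtens_indexP j) => c d.
rewrite tensmxE !mxE (can_eq (@mxtens_indexK _ _)) xpair_eqE.
by case: (a == c); case: (b == d); rewrite ?mulr1 ?mulr0.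
Qed.

Lemma tensmx_exp (R : comPzRingType) m n (A : 'M[R]_m) (B : 'M[R]_n) k :
  (A *t B) ^+ k = A ^+ k *t B ^+ k.
Proof.
elim: k => [|k IHk]; first by rewrite !expr0 tensmx11.
by rewrite !exprS IHk -tensmx_mul.
Qed.

Section BipartiteDouble.
Variable R : realType.

Lemma adjK2_exp k : adjK2 R ^+ k = if odd k then adjK2 R else 1.
Proof.
have adjK2_sqr : adjK2 R * adjK2 R = 1.
  rewrite -mulmxE; apply/matrixP => i j; rewrite !mxE !big_ord_recl big_ord0 !mxE.
  by case: i => [[|[|?]] ?] //; case: j => [[|[|?]] ?] //=; ring.
elim: k => [|k IHk] //; rewrite exprS IHk /=.
by case: (odd k) => /=; rewrite ?mulr1.
Qed.

Lemma bipdouble_exp_copy n (A : 'M[R]_n) k a u :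
  (bipdouble A ^+ k) (copy a u) (copy a u) = (~~ odd k)%:R * (A ^+ k) u u.
Proof.
rewrite /bipdouble tensmx_exp /copy tensmxE adjK2_exp.
by case: (odd k); rewrite /= ?mxE ?eqxx.
Qed.

(* Stated as moments of eigenvalues [+-r_j] with weights [w_j / 2], so that
   [transfer_moments] applies to the double. *)
Lemma bipdouble_moments n (A : 'M[R]_n) u a (I : finType) (w r : I -> R) :
  (forall k, (A ^+ k) u u = \sum_j w j * r j ^+ k) ->
  forall k, (bipdouble A ^+ k) (copy a u) (copy a u) =
    \sum_(p : bool * I) w p.2 / 2 * (if p.1 then r p.2 else - r p.2) ^+ k.
Proof.
move=> moments k; rewrite bipdouble_exp_copy moments mulr_sumr.
rewrite -(pair_bigA _ (fun b j => w j / 2 * (if b then r j else - r j) ^+ k)) exchange_big.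
apply: eq_bigr => j _; rewrite big_bool /= exprNn -signr_odd.
by case: (odd k) => /=; field.
Qed.

End BipartiteDouble.

Lemma mulmx_trmx_eq0 (R : realDomainType) m n (X : 'M[R]_(m, n)) :
  X *m X^T = 0 -> X = 0.
Proof.
move=> XXt0; apply/matrixP => i j; rewrite mxE.
have /matrixP/(_ i i) := XXt0; rewrite !mxE => sum_sqr0.
have sqr_ge0 l : 0 <= X i l * X^T l i by rewrite mxE -expr2 sqr_ge0.
have /(_ j isT) := psumr_eq0P (fun l _ => sqr_ge0 l) sum_sqr0.
by rewrite mxE => /eqP; rewrite mulf_eq0 orbb => /eqP.
Qed.

Lemma mulmx_trmx_unit (R : realFieldType) m n (B : 'M[R]_(m, n)) :
  row_free B -> B *m B^T \in unitmx.
Proof.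
move=> freeB; rewrite -row_free_unit -kermx_eq0; apply/eqP.
set K := kermx _.
have KB0 : K *m B = 0.
  by apply: mulmx_trmx_eq0; rewrite trmx_mul mulmxA -(mulmxA K) mulmx_ker mul0mx.
by apply/eqP; rewrite -(mulmx_free_eq0 _ freeB) KB0.
Qed.

Lemma map_orthoproj_fix (F K : fieldType) (f : {rmorphism F -> K}) m n
    (B : 'M[F]_(m, n)) (q : 'rV[K]_n) :
  B *m B^T \in unitmx -> (q <= map_mx f B)%MS ->
  q *m map_mx f (B^T *m invmx (B *m B^T) *m B) = q.
Proof.
move=> BBt_unit /submxP [y ->].
rewrite !map_mxM map_invmx map_mxM -map_trmx -!mulmxA; congr (_ *m _).
by rewrite !mulmxA mulmxV ?mul1mx // map_trmx -map_mxM map_unitmx.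
Qed.

Lemma diag_conj_exp (R : comUnitRingType) n (Q : 'M[R]_n) (d : 'I_n -> R) k :
  Q \in unitmx ->
  (invmx Q *m diag_mx (\row_j d j) *m Q) ^+ k = invmx Q *m diag_mx (\row_j d j ^+ k) *m Q.
Proof.
move=> Q_unit; elim: k => [|k IHk].
  rewrite expr0 (_ : diag_mx _ = 1%:M) ?mulmx1 ?mulVmx //.
  by apply/matrixP => i j; rewrite !mxE expr0.
rewrite exprS IHk -mulmxE !mulmxA -(mulmxA _ Q) mulmxV // mulmx1.
rewrite -(mulmxA (invmx Q) (diag_mx _) (diag_mx _)) mulmx_diag.
congr (_ *m diag_mx _ *m _).
by apply/rowP => j; rewrite !mxE exprS.
Qed.

(* The rows of [Q] are eigenvectors of [M]; [P] kills those with eigenvalue [d_j <> l]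
   and fixes those with [d_j = l]. *)
Lemma eigenproj_diag_conj (K : fieldType) n (M P Q : 'M[K]_n) (d : 'I_n -> K) l :
  Q \in unitmx -> M = invmx Q *m diag_mx (\row_j d j) *m Q ->
  (M - l%:M) *m P = 0 -> (forall q : 'rV_n, q *m (M - l%:M) = 0 -> q *m P = q) ->
  P = invmx Q *m diag_mx (\row_j (d j == l)%:R) *m Q.
Proof.
move=> Q_unit MQ MP0 Pfix.
have rowQM j : row j Q *m (M - l%:M) = (d j - l) *: row j Q.
  rewrite mulmxBr mul_mx_scalar scalerBl -row_mul MQ !mulmxA mulmxV // mul1mx.
  by rewrite mul_diag_mx; congr (_ - _); apply/rowP => v; rewrite !mxE.
have rowQP j : row j Q *m P = (d j == l)%:R *: row j Q.
  have [djl | djl] := eqVneq (d j) l.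
    by rewrite scale1r Pfix // rowQM djl subrr scale0r.
  have : (d j - l) *: (row j Q *m P) = 0.
    by rewrite scalemxAl -rowQM -mulmxA MP0 mulmx0.
  by move/eqP; rewrite scaler_eq0 subr_eq0 (negbTE djl) scale0r => /eqP.
rewrite -mulmxA; apply: (canRL (mulKmx Q_unit)); apply/row_matrixP => j.
by rewrite row_mul rowQP mul_diag_mx; apply/rowP => v; rewrite !mxE.
Qed.

Lemma map_mxX (R S : pzRingType) (f : {rmorphism R -> S}) n (A : 'M[R]_n) k :
  map_mx f (A ^+ k) = map_mx f A ^+ k.
Proof.
elim: k => [|k IHk]; first by rewrite !expr0 map_mx1.
by rewrite !exprS -!mulmxE map_mxM IHk.
Qed.

Section RealSymmetric.
Local Open Scope complex_scope.
Variable R : realType.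
Local Notation toC := (map_mx (real_complex R)).

Lemma trmx_eigenproj n (A : 'M[R]_n) l : (eigenproj A l)^T = eigenproj A l.
Proof.
rewrite /eigenproj /=; move: (row_base _) => B.
by rewrite !trmx_mul trmxK trmx_inv trmx_mul trmxK mulmxA.
Qed.

Lemma eigenproj_ker n (A : 'M[R]_n) l : eigenproj A l *m (A - l%:M) = 0.
Proof.
have : row_base (eigenspace A l) *m (A - l%:M) = 0.
  by apply/sub_kermxP; rewrite eq_row_base.
by rewrite /eigenproj -!mulmxA => ->; rewrite !mulmx0.
Qed.

Lemma ker_eigenproj n (A : 'M[R]_n) l : A^T = A -> (A - l%:M) *m eigenproj A l = 0.
Proof.
move=> symA; apply: trmx_inj.
by rewrite trmx_mul trmx_eigenproj linearB /= symA tr_scalar_mx eigenproj_ker trmx0.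
Qed.

Lemma map_eigenproj_fix n (A : 'M[R]_n) l (q : 'rV[R[i]]_n) :
  q *m toC (A - l%:M) = 0 -> q *m toC (eigenproj A l) = q.
Proof.
move=> /sub_kermxP; rewrite -map_kermx -((map_eqmx _ _ _).2 (eq_row_base _)).
exact/map_orthoproj_fix/mulmx_trmx_unit/row_base_free.
Qed.

Lemma realsym_spectral n (A : 'M[R]_n) : A^T = A ->
  exists (Q : 'M[R[i]]_n) (r : 'I_n -> R), Q \is unitarymx /\
    toC A = invmx Q *m diag_mx (\row_j (r j)%:C) *m Q.
Proof.
move=> symA; have hermA : toC A \is hermsymmx.
  apply: realsym_hermsym; last by apply/mxOverP => i j; rewrite mxE complex_real.
  by apply/is_hermitianmxP; rewrite expr0 scale1r map_mx_id // map_trmx symA.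
have /orthomx_spectralP AQ := hermitian_normalmx hermA.
move: AQ (mxOverP (hermitian_spectral_diag_real hermA)) (spectral_unitarymx (toC A)).
move: (spectral_diag _) (spectralmx _) => d Q AQ d_real Q_unitary.
exists Q, (fun j => complex.Re (d 0 j)); split; first exact: Q_unitary.
suff -> : \row_j (complex.Re (d 0 j))%:C = d by [].
by apply/rowP => j; rewrite mxE RRe_real ?d_real.
Qed.

Lemma unitary_diag_conj_entry (C : numClosedFieldType) n (Q : 'M[C]_n)
    (d : 'I_n -> C) u :
  Q \is unitarymx ->
  (invmx Q *m diag_mx (\row_j d j) *m Q) u u = \sum_j d j * ((Q j u)^* * Q j u).
Proof.
move=> /invmx_unitary ->; rewrite mxE; apply: eq_bigr => j _.
by rewrite mul_mx_diag !mxE mulrA [_ * d j]mulrC.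
Qed.

Lemma spectral_moments n (A : 'M[R]_n) u : A^T = A ->
  exists w r : 'I_n -> R, [/\ forall j, 0 <= w j,
    forall k, (A ^+ k) u u = \sum_j w j * r j ^+ k &
    forall l, eigenproj A l u u = \sum_(j | r j == l) w j].
Proof.
move=> symA; have [Q [r [Q_unitary AQ]]] := realsym_spectral symA.
have Q_unit := unitarymx_unit Q_unitary.
pose w j := complex.Re ((Q j u)^* * Q j u).
have wC j : (w j)%:C = (Q j u)^* * Q j u.
  by rewrite RRe_real //; apply: ger0_real; rewrite mulrC mul_conjC_ge0.
have entry (M : 'M[R]_n) (d : 'I_n -> R[i]) :
    toC M = invmx Q *m diag_mx (\row_j d j) *m Q -> (M u u)%:C = \sum_j d j * (w j)%:C.
  move=> MQ; have -> : (M u u)%:C = toC M u u by rewrite mxE.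
  rewrite MQ (unitary_diag_conj_entry d u Q_unitary).
  by apply: eq_bigr => j _; rewrite wC.
exists w, r; split.
- by move=> j; rewrite -lecR wC mulrC mul_conjC_ge0.
- move=> k; apply: complexI; rewrite (entry _ (fun j => (r j)%:C ^+ k)).
    by rewrite rmorph_sum; apply: eq_bigr => j _; rewrite rmorphM rmorphXn mulrC.
  by rewrite map_mxX AQ; exact: diag_conj_exp.
- move=> l; apply: complexI; rewrite (entry _ (fun j => ((r j)%:C == l%:C)%:R)).
    rewrite rmorph_sum [RHS]big_mkcond; apply: eq_bigr => j _.
    by rewrite eq_complex /= eqxx andbT; case: eqP; rewrite ?mul1r ?mul0r.
  have toC_shift : toC (A - l%:M) = toC A - (l%:C)%:M.
    by rewrite map_mxB map_scalar_mx.
  apply: (eigenproj_diag_conj Q_unit AQ); rewrite -toC_shift.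
    by rewrite -map_mxM ker_eigenproj ?map_mx0.
  exact: map_eigenproj_fix.
Qed.

End RealSymmetric.

Section BoundedAway.
Variable R : realType.

Definition bounded_away_from0 (h : R -> R) : Prop :=
  exists C : R, 0 < C <= 1 /\ forall t, 0 < t -> C <= h t.

Lemma bounded_away_from0_le (h1 h2 : R -> R) :
  (forall t, 0 < t -> h1 t <= h2 t) -> bounded_away_from0 h1 -> bounded_away_from0 h2.
Proof.
move=> le_h [C [C_range C_le]]; exists C; split=> // t t_gt0.
exact: le_trans (C_le t t_gt0) (le_h t t_gt0).
Qed.

Lemma bounded_away_from0_sqr (c : R) (h1 h2 : R -> R) : 1 <= c ->
  (forall t, 0 < t -> h1 t ^+ 2 <= c * h2 t) ->
  bounded_away_from0 h1 -> bounded_away_from0 h2.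
Proof.
move=> c_ge1 le_h [C [/andP [C_gt0 C_le1] C_le]].
have c_gt0 : 0 < c by apply: lt_le_trans c_ge1.
exists (C ^+ 2 / c); split.
  apply/andP; split; first by rewrite divr_gt0 ?exprn_gt0.
  rewrite ler_pdivrMr // mul1r; apply: le_trans c_ge1.
  by rewrite expr2 mulr_ile1 // ltW.
move=> t t_gt0; have C_le_h1 := C_le t t_gt0.
rewrite ler_pdivrMr // mulrC; apply: le_trans (le_h t t_gt0).
by apply: lerXn2r; rewrite // nnegrE ltW // (lt_le_trans C_gt0 C_le_h1).
Qed.

Lemma normr_le_sqrt_sqrD (x y : R) : `|x| <= Num.sqrt (x ^+ 2 + y ^+ 2).
Proof. by rewrite -sqrtr_sqr ler_wsqrtr // lerDl sqr_ge0. Qed.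

End BoundedAway.

Section WeightedTrigonometricSums.
Variables (R : realType) (I : finType) (w r : I -> R).
Hypothesis w_ge0 : forall j, 0 <= w j.
Hypothesis w_sum1 : \sum_j w j = 1.

Local Notation f t := (\sum_j w j * cos (t * r j)).
Local Notation g t := (\sum_j w j * sin (t * r j)).
Local Notation p := (\sum_(j | r j == 0) w j).

Lemma sqr_wmean_le (x : I -> R) : (\sum_j w j * x j) ^+ 2 <= \sum_j w j * x j ^+ 2.
Proof.
set m := \sum_j w j * x j.
have var_ge0 : 0 <= \sum_j (w j * x j ^+ 2 - 2 * m * (w j * x j) + m ^+ 2 * w j).
  apply: sumr_ge0 => j _; rewrite (_ : _ + _ = w j * (x j - m) ^+ 2); last by ring.
  by rewrite mulr_ge0 ?sqr_ge0.
by move: var_ge0; rewrite big_split sumrB /= -!mulr_sumr -/m w_sum1; nra.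
Qed.

Lemma wcos_ge t : 2 * p - 1 <= f t.
Proof.
have -> : 2 * p - 1 = \sum_j (2 * (if r j == 0 then w j else 0) - w j).
  by rewrite sumrB -mulr_sumr -big_mkcond w_sum1.
apply: ler_sum => j _; have := w_ge0 j; have := cos_geN1 (t * r j).
by case: eqP => [->|_]; rewrite ?mulr0 ?cos0 => *; nra.
Qed.

Lemma wcos_le1 t : f t <= 1.
Proof.
rewrite -w_sum1; apply: ler_sum => j _.
by have := w_ge0 j; have := cos_le1 (t * r j); nra.
Qed.

(* Jensen, then termwise [sin^2 = (1 - cos) (1 + cos) <= 2 (1 + cos)]. *)
Lemma wsin_sqr_le t : g t ^+ 2 <= 2 + 2 * f t - 4 * p.
Proof.
apply: le_trans (sqr_wmean_le _) _.
have -> : 2 + 2 * f t - 4 * p =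
    \sum_j (2 * w j + 2 * (w j * cos (t * r j)) - 4 * (if r j == 0 then w j else 0)).
  by rewrite !sumrB big_split /= -!mulr_sumr -big_mkcond w_sum1 mulr1.
apply: ler_sum => j _; case: eqP => [->|_] /=.
  by rewrite mulr0 cos0 sin0 expr0n /= mulr0 mulr1; lra.
have := cos2Dsin2 (t * r j); move: (cos _) (sin _) => c s cs1.
have : 0 <= w j * (1 + c) ^+ 2 by rewrite mulr_ge0 ?sqr_ge0.
have -> : s ^+ 2 = 1 - c ^+ 2 by rewrite -cs1; ring.
nra.
Qed.

Lemma wmodulus_bounded_away_gt_half : 1 / 2 < p ->
  bounded_away_from0 (fun t => Num.sqrt (f t ^+ 2 + g t ^+ 2)) /\
  bounded_away_from0 (fun t => `|f t|).
Proof.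
move=> p_gt; have p_le1 : p <= 1 by have := wcos_ge 0; have := wcos_le1 0; lra.
have f_bound : bounded_away_from0 (fun t => f t).
  by exists (2 * p - 1); split=> [|t _]; [apply/andP; split; lra | exact: wcos_ge].
split; apply: bounded_away_from0_le f_bound => t _.
  exact: le_trans (ler_norm _) (normr_le_sqrt_sqrD _ _).
exact: ler_norm.
Qed.

(* With [p = 1/2]: [0 <= f] and [g^2 <= 2 f], so [f^2 + g^2 <= 3 f]. *)
Lemma wmodulus_bounded_away_half : p = 1 / 2 ->
  bounded_away_from0 (fun t => Num.sqrt (f t ^+ 2 + g t ^+ 2)) <->
  bounded_away_from0 (fun t => `|f t|).
Proof.
move=> p_half; split; last first.
  by apply: bounded_away_from0_le => t _; exact: normr_le_sqrt_sqrD.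
apply: (@bounded_away_from0_sqr _ 3); first by lra.
move=> t _; have := wcos_ge t; have := wcos_le1 t; have := wsin_sqr_le t.
rewrite p_half sqr_sqrtr ?addr_ge0 ?sqr_ge0 //.
set F := f t; set G := g t => G_le F_le1 F_ge0.
by rewrite ger0_norm //; nra.
Qed.

End WeightedTrigonometricSums.

Section Sedentary.
Local Open Scope complex_scope.
Variable R : realType.

Lemma sedentaryE n (A : 'M[R]_n) u : sedentary A u <->
  bounded_away_from0 (fun t => Num.sqrt (complex.Re (transfer A t u u) ^+ 2 +
                                         complex.Im (transfer A t u u) ^+ 2)).
Proof.
split=> -[C [C_range C_le]]; exists C; split=> // t t_gt0.
  by move: (C_le t t_gt0); rewrite normc_def lecR.
by rewrite normc_def lecR; exact: C_le.
Qed.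

Lemma sedentary_moments n (A : 'M[R]_n) u (I : finType) (w r : I -> R) :
  (forall k, (A ^+ k) u u = \sum_j w j * r j ^+ k) ->
  sedentary A u <-> bounded_away_from0 (fun t =>
    Num.sqrt ((\sum_j w j * cos (t * r j)) ^+ 2 + (\sum_j w j * sin (t * r j)) ^+ 2)).
Proof.
by move=> moments; rewrite sedentaryE; under eq_fun do rewrite (transfer_moments moments).
Qed.

Lemma transfer_bipdouble_copy n (A : 'M[R]_n) u a (I : finType) (w r : I -> R) :
  (forall k, (A ^+ k) u u = \sum_j w j * r j ^+ k) ->
  forall t, transfer (bipdouble A) t (copy a u) (copy a u) =
    (\sum_j w j * cos (t * r j)) +i* 0.
Proof.
move=> moments t; rewrite (transfer_moments (bipdouble_moments a moments)).
congr (_ +i* _).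
  rewrite -(pair_bigA _ (fun b j => w j / 2 * cos (t * (if b then r j else - r j)))).
  by rewrite exchange_big; apply: eq_bigr => j _; rewrite big_bool /= mulrN cosN; field.
rewrite -(pair_bigA _ (fun b j => w j / 2 * sin (t * (if b then r j else - r j)))).
by rewrite exchange_big; apply: big1 => j _; rewrite big_bool /= mulrN sinN; ring.
Qed.

Lemma sedentary_bipdouble_copy n (A : 'M[R]_n) u a (I : finType) (w r : I -> R) :
  (forall k, (A ^+ k) u u = \sum_j w j * r j ^+ k) ->
  sedentary (bipdouble A) (copy a u) <->
  bounded_away_from0 (fun t => `|\sum_j w j * cos (t * r j)|).
Proof.
move=> moments; rewrite sedentaryE.
by under eq_fun do rewrite (transfer_bipdouble_copy a moments) /= expr0n addr0 sqrtr_sqr.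
Qed.

End Sedentary.

Theorem theorem27 (R : realType) (n : nat) (A : 'M[R]_n) (u : 'I_n) :
  weighted_graph A -> connected_graph A -> ~ bipartite_graph A ->
  eigsupport A u 0 ->
  (1 / 2 < eigenproj A 0 u u ->
     sedentary A u /\ sedentary (bipdouble A) (copy 0 u)
                   /\ sedentary (bipdouble A) (copy 1 u)) /\
  (eigenproj A 0 u u = 1 / 2 ->
     (sedentary A u <->
        sedentary (bipdouble A) (copy 0 u) /\ sedentary (bipdouble A) (copy 1 u))).
Proof.
move=> [symA _] _ _ _.
have [w [r [w_ge0 moments projE]]] := spectral_moments u symA.
have w_sum1 : \sum_j w j = 1.
  transitivity (\sum_j w j * r j ^+ 0); first by apply: eq_bigr => j _; rewrite mulr1.
  by rewrite -moments expr0 mxE eqxx.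
rewrite projE (sedentary_moments moments) !(sedentary_bipdouble_copy _ moments).
split=> [p_gt | p_half].
- by have [] := wmodulus_bounded_away_gt_half w_ge0 w_sum1 p_gt.
- by rewrite (wmodulus_bounded_away_half w_ge0 w_sum1 p_half); tauto.
Qed.
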